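(* Let $\mathcal{Y}=\{\boldsymbol{x}_1,\dots,\boldsymbol{x}_m\}$ be a finite subset of the unit ball $B_n(1)=\{\boldsymbol{x}\in\mathbb{R}^n:\|\boldsymbol{x}\|\le1\}$ with $\|\boldsymbol{x}_i\|\ge1-\varepsilon$ for all $i$, where $\varepsilon\in(0,1)$. Let $\beta_1,\beta_2\in\mathbb{R}$ satisfy $$\beta_2(m-1)\le\sum_{j\in\{1,\dots,m\},\,j\ne i}\langle\boldsymbol{x}_i,\boldsymbol{x}_j\rangle\le\beta_1(m-1)\quad\text{for all }i=1,\dots,m,$$ and $$(1-\varepsilon)^2+\beta_2(m-1)>0,\qquad 1+(m-1)\beta_1>0.$$ Let $\bar{\boldsymbol{y}}=\frac1m\sum_{i=1}^m\boldsymbol{x}_i$ and $$\ell(\boldsymbol{x})=\Big\langle\frac{\bar{\boldsymbol{y}}}{\|\bar{\boldsymbol{y}}\|},\boldsymbol{x}\Big\rangle-\frac1{\sqrt m}\Big(\frac{(1-\varepsilon)^2+\beta_2(m-1)}{\sqrt{1+(m-1)\beta_1}}\Big).$$ Then $\ell(\boldsymbol{x}_i)\ge0$ for all $\boldsymbol{x}_i\in\mathcal{Y}$.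
   Context: $\langle\cdot,\cdot\rangle$ and $\|\cdot\|$ denote the Euclidean inner product and norm on $\mathbb{R}^n$. *)

From HB Require Import structures.
From mathcomp Require Import all_boot all_order all_algebra.
Set Implicit Arguments. Unset Strict Implicit. Unset Printing Implicit Defensive.
Import Order.TTheory GRing.Theory Num.Theory.
Local Open Scope ring_scope.

Definition dotp (R : rcfType) (n : nat) (u v : 'rV[R]_n) : R :=
  \sum_(k < n) u 0 k * v 0 k.

Definition enorm (R : rcfType) (n : nat) (u : 'rV[R]_n) : R :=
  Num.sqrt (dotp u u).

(* Write G_j = sum_k <x_j, x_k> for the row sums of the Gram matrix; the
   hypotheses say exactly that A <= G_j <= B, with A = (1-eps)^2 + beta2 (m-1)
   and B = 1 + (m-1) beta1.  Then <ybar, x_i> = G_i / m >= A / m, while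
   ||ybar||^2 = (sum_j G_j) / m^2 <= B / m, so that
   <ybar/||ybar||, x_i> >= (A / m) / sqrt (B / m) = A / (sqrt m sqrt B). *)
From mathcomp Require Import all_boot all_order all_algebra.
From mathcomp Require Import lra.
Import Order.TTheory GRing.Theory Num.Theory.
Local Open Scope ring_scope.

Section DotProduct.
Variables (R : rcfType) (n : nat).
Implicit Types u v : 'rV[R]_n.

Lemma dotpC u v : dotp u v = dotp v u.
Proof. by apply: eq_bigr => k _; rewrite mulrC. Qed.

Lemma dotpZl a u v : dotp (a *: u) v = a * dotp u v.
Proof. by rewrite /dotp mulr_sumr; apply: eq_bigr => k _; rewrite mxE mulrA. Qed.

Lemma dotp_suml m (f : 'I_m -> 'rV[R]_n) v :
  dotp (\sum_(i < m) f i) v = \sum_(i < m) dotp (f i) v.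
Proof.
rewrite /dotp exchange_big /=; apply: eq_bigr => k _.
by rewrite summxE mulr_suml.
Qed.

Lemma dotp0l v : dotp 0 v = 0.
Proof. by rewrite /dotp big1 // => k _; rewrite mxE mul0r. Qed.

Lemma dotpp_ge0 u : 0 <= dotp u u.
Proof. by apply: sumr_ge0 => k _; rewrite -expr2 sqr_ge0. Qed.

Lemma dotpp_eq0 u : (dotp u u == 0) = (u == 0).
Proof.
apply/idP/eqP => [/eqP uu0 | ->]; last by rewrite dotp0l.
apply/rowP => k; rewrite mxE; apply/eqP; rewrite -sqrf_eq0 expr2; apply/eqP.
by move: uu0 => /psumr_eq0P -> // j _; rewrite -expr2 sqr_ge0.
Qed.

Lemma enorm_ge0 u : 0 <= enorm u.
Proof. exact: sqrtr_ge0. Qed.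

Lemma sqr_enorm u : enorm u ^+ 2 = dotp u u.
Proof. by rewrite /enorm sqr_sqrtr // dotpp_ge0. Qed.

Lemma enorm_gt0 u : u != 0 -> 0 < enorm u.
Proof. by move=> u0; rewrite sqrtr_gt0 lt_def dotpp_eq0 u0 dotpp_ge0. Qed.

Lemma dotpp_le_sqr a u : enorm u <= a -> dotp u u <= a ^+ 2.
Proof. by move=> ua; rewrite -sqr_enorm ler_pXn2r ?nnegrE ?(le_trans _ ua) ?enorm_ge0. Qed.

Lemma sqr_le_dotpp a u : 0 <= a -> a <= enorm u -> a ^+ 2 <= dotp u u.
Proof. by move=> a0 au; rewrite -sqr_enorm ler_pXn2r ?nnegrE ?enorm_ge0. Qed.

End DotProduct.

Lemma inv_sqrt_div_le (R : rcfType) (m A B c N : R) :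
  0 < m -> 0 < A -> 0 < N -> A <= m * c -> m * N ^+ 2 <= B ->
  (Num.sqrt m)^-1 * (A / Num.sqrt B) <= N^-1 * c.
Proof.
move=> m_gt0 A_gt0 N_gt0 A_le N_le.
have sN_le : Num.sqrt m * N <= Num.sqrt B.
  rewrite -[X in _ * X](ger0_norm (ltW N_gt0)) -sqrtr_sqr -sqrtrM ?(ltW m_gt0) //.
  exact: ler_wsqrtr.
have s_gt0 : 0 < Num.sqrt m by rewrite sqrtr_gt0.
have t_gt0 : 0 < Num.sqrt B by apply: lt_le_trans sN_le; rewrite mulr_gt0.
have c_gt0 : 0 < c by rewrite -(pmulr_rgt0 _ m_gt0) (lt_le_trans A_gt0).
rewrite mulrCA -invfM ler_pdivrMr ?mulr_gt0 // -mulrA ler_pdivlMl //.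
(* N A <= N (sqrt m)^2 c = c sqrt m (sqrt m N) <= c sqrt m sqrt B *)
rewrite -(sqr_sqrtr (ltW m_gt0)) in A_le; nra.
Qed.

Section Centroid.
Variables (R : rcfType) (n m : nat) (x : 'I_m -> 'rV[R]_n).

Definition centroid : 'rV[R]_n := m%:R^-1 *: \sum_(i < m) x i.

Definition gram_rowsum (j : 'I_m) : R := \sum_(k < m) dotp (x j) (x k).

Lemma gram_rowsumE j :
  gram_rowsum j = dotp (x j) (x j) + \sum_(k < m | k != j) dotp (x j) (x k).
Proof. exact: bigD1. Qed.

Lemma dotp_centroidl v : dotp centroid v = m%:R^-1 * \sum_(i < m) dotp (x i) v.
Proof. by rewrite dotpZl dotp_suml. Qed.

Lemma dotp_centroid_elt i : dotp centroid (x i) = m%:R^-1 * gram_rowsum i.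
Proof. by rewrite dotp_centroidl; congr (_ * _); apply: eq_bigr => k _; rewrite dotpC. Qed.

Lemma dotp_centroidd :
  dotp centroid centroid = m%:R^-1 * (m%:R^-1 * \sum_(j < m) gram_rowsum j).
Proof.
rewrite dotp_centroidl; congr (_ * _); rewrite mulr_sumr.
by apply: eq_bigr => j _; rewrite dotpC dotp_centroid_elt.
Qed.

Variables (A B : R).
Hypotheses (A_gt0 : 0 < A) (gram_rowsum_ge : forall j, A <= gram_rowsum j)
  (gram_rowsum_le : forall j, gram_rowsum j <= B).

Lemma centroid_direction_dotp_ge i :
  (Num.sqrt m%:R)^-1 * (A / Num.sqrt B)
    <= dotp ((enorm centroid)^-1 *: centroid) (x i).
Proof.
have m_gt0 : 0 < m%:R :> R by rewrite ltr0n (leq_ltn_trans _ (ltn_ord i)).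
have A_le : A <= m%:R * dotp centroid (x i).
  by rewrite dotp_centroid_elt mulVKf ?gt_eqF.
have centroid_neq0 : centroid != 0.
  apply: contra_ltN A_gt0 => /eqP c0.
  by rewrite (le_trans A_le) // c0 dotp0l mulr0.
rewrite dotpZl; apply: inv_sqrt_div_le; rewrite ?enorm_gt0 //.
rewrite sqr_enorm dotp_centroidd mulVKf ?gt_eqF //.
rewrite ler_pdivrMl // mulr_natl -[in B *+ m](card_ord m) -sumr_const.
exact: ler_sum.
Qed.

End Centroid.

Theorem lemma4 (R : rcfType) (n m : nat) (x : 'I_m -> 'rV[R]_n)
    (eps beta1 beta2 : R) :
  injective x ->
  0 < eps < 1 ->
  (forall i, enorm (x i) <= 1) ->
  (forall i, 1 - eps <= enorm (x i)) ->
  (forall i, beta2 * (m%:R - 1) <= \sum_(j < m | j != i) dotp (x i) (x j)) ->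
  (forall i, \sum_(j < m | j != i) dotp (x i) (x j) <= beta1 * (m%:R - 1)) ->
  0 < (1 - eps) ^+ 2 + beta2 * (m%:R - 1) ->
  0 < 1 + (m%:R - 1) * beta1 ->
  let ybar := m%:R^-1 *: \sum_(i < m) x i in
  let ell := fun v : 'rV[R]_n =>
    dotp ((enorm ybar)^-1 *: ybar) v
    - (Num.sqrt m%:R)^-1 *
      (((1 - eps) ^+ 2 + beta2 * (m%:R - 1)) / Num.sqrt (1 + (m%:R - 1) * beta1)) in
  forall i, 0 <= ell (x i).
Proof.
move=> _ /andP[_ eps_lt1] x_le1 x_ge offdiag_ge offdiag_le A_gt0 _ ybar ell i.
rewrite /ell subr_ge0; apply: (@centroid_direction_dotp_ge _ _ _ x _ _ A_gt0) => j.
  rewrite gram_rowsumE lerD ?offdiag_ge // sqr_le_dotpp ?x_ge //.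
  by rewrite subr_ge0 ltW.
by rewrite gram_rowsumE mulrC lerD ?offdiag_le // -(expr1n R 2) dotpp_le_sqr.
Qed.
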